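(* Let \(E\) be a semilattice with unit and zero. Open subsets of \(\hat E\) correspond bijectively to ideals in \(E\). To an open subset \(A\subseteq\hat E\) corresponds the ideal \(I_A=\{e\in E:U_e\subseteq A\}\). To an ideal \(I\) corresponds the open subset \(A_I=\{\varphi\in\hat E:\varphi(e)=1\text{ for some }e\in I\}=\bigcup_{e\in I}U_e\).
   Context: A semilattice is a commutative semigroup of idempotents with unit \(1\) and zero \(0\), ordered by \(e\le f\iff ef=e\). An ideal in \(E\) is a subset \(I\subseteq E\) containing \(0\) such that \(ef\in I\) whenever \(e\in E\) and \(f\in I\) (equivalently, \(e\in I\) whenever \(f\in I\) and \(e\le f\)). A character on \(E\) is a map \(\varphi\colon E\to\{0,1\}\) with \(\varphi(0)=0\), \(\varphi(1)=1\), \(\varphi(ef)=\varphi(e)\varphi(f)\). \(\hat E\) is the set of characters, \(U_e=\{\varphi:\varphi(e)=1\}\), and \(\hat E\) carries the topology generated by the sets \(U_e\). *)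

Record semilattice := Semilattice {
  sl_car :> Type;
  sl_mul : sl_car -> sl_car -> sl_car;
  sl_one : sl_car;
  sl_zero : sl_car;
  sl_mulA : forall e f g, sl_mul e (sl_mul f g) = sl_mul (sl_mul e f) g;
  sl_mulC : forall e f, sl_mul e f = sl_mul f e;
  sl_mulI : forall e, sl_mul e e = e;
  sl_mul1 : forall e, sl_mul sl_one e = e;
  sl_mul0 : forall e, sl_mul sl_zero e = sl_zero
}.

Section Defs.
Variable E : semilattice.

Definition sl_le (e f : E) : Prop := sl_mul E e f = e.

Definition is_ideal (I : E -> Prop) : Prop :=
  I (sl_zero E) /\ (forall e f : E, I f -> I (sl_mul E e f)).

(* Characters E -> {0,1}; we use bool with false = 0, true = 1. *)
Definition is_character (phi : E -> bool) : Prop :=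
  phi (sl_zero E) = false /\ phi (sl_one E) = true /\
  (forall e f : E, phi (sl_mul E e f) = andb (phi e) (phi f)).

Definition character := { phi : E -> bool | is_character phi }.

Definition chi (phi : character) : E -> bool := proj1_sig phi.

Definition U (e : E) : character -> Prop := fun phi => chi phi e = true.

(* The topology on \hat E generated by the sets U_e: the smallest family
   of subsets containing every U_e, the whole space, and closed under
   binary intersections and arbitrary unions. *)
Inductive gen_open : (character -> Prop) -> Prop :=
  | go_basic : forall e, gen_open (U e)
  | go_full : gen_open (fun _ => True)
  | go_inter : forall A B, gen_open A -> gen_open B ->
      gen_open (fun phi => A phi /\ B phi)
  | go_union : forall (J : Type) (F : J -> character -> Prop),
      (forall j, gen_open (F j)) -> gen_open (fun phi => exists j, F j phi)
  | go_ext : forall A B, gen_open A -> (forall phi, A phi <-> B phi) ->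
      gen_open B.

Definition ideal_of (A : character -> Prop) : E -> Prop :=
  fun e => forall phi, U e phi -> A phi.

Definition open_of (I : E -> Prop) : character -> Prop :=
  fun phi => exists e, I e /\ chi phi e = true.

End Defs.
Arguments ideal_of {E} A _.
Arguments open_of {E} I _.
Arguments U {E} e _.
Arguments chi {E} phi _.
Arguments is_ideal {E} I.
Arguments gen_open {E} _.

(* For e <> 0 the map f |-> [e <= f] is a character lying in U_e; so if U_e
   is covered by the U_f with f in an ideal I, then e <= f for some f in I,
   and e = ef lies in I.  Conversely, U_e and U_f intersect in U_(ef), so
   every open set is the union of the basic sets U_e it contains. *)
From Stdlib Require Import Bool Classical ClassicalEpsilon.

Section Semilattice.
Variable E : semilattice.

Lemma sl_le_mulr (e f g : E) : sl_le E e (sl_mul E f g) -> sl_le E e f.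
Proof.
  unfold sl_le; intro Hle.
  rewrite <- Hle at 1.
  rewrite <- sl_mulA, (sl_mulC E (sl_mul E f g) f), (sl_mulA E f f g), sl_mulI.
  exact Hle.
Qed.

Lemma sl_le_mul (e f g : E) :
  sl_le E e (sl_mul E f g) <-> sl_le E e f /\ sl_le E e g.
Proof.
  split.
  - intro Hle; split.
    + exact (sl_le_mulr e f g Hle).
    + rewrite sl_mulC in Hle. exact (sl_le_mulr e g f Hle).
  - unfold sl_le; intros [Hf Hg]. rewrite sl_mulA, Hf. exact Hg.
Qed.

Lemma chi_zero (phi : character E) : chi phi (sl_zero E) = false.
Proof. exact (proj1 (proj2_sig phi)). Qed.

Lemma chi_one (phi : character E) : chi phi (sl_one E) = true.
Proof. exact (proj1 (proj2 (proj2_sig phi))). Qed.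

Lemma chi_mul_true (phi : character E) (e f : E) :
  chi phi (sl_mul E e f) = true <-> chi phi e = true /\ chi phi f = true.
Proof.
  unfold chi. rewrite (proj2 (proj2 (proj2_sig phi))). apply andb_true_iff.
Qed.

Definition principal_chi (e f : E) : bool :=
  if excluded_middle_informative (sl_le E e f) then true else false.

Lemma principal_chi_true (e f : E) : principal_chi e f = true <-> sl_le E e f.
Proof.
  unfold principal_chi; destruct excluded_middle_informative; split; congruence.
Qed.

Lemma principal_chi_is_character (e : E) :
  e <> sl_zero E -> is_character E (principal_chi e).
Proof.
  intro He0; split; [| split].
  - apply not_true_is_false; intros H0%principal_chi_true.
    apply He0. unfold sl_le in H0. rewrite sl_mulC, sl_mul0 in H0. auto.
  - apply principal_chi_true. unfold sl_le. rewrite sl_mulC. apply sl_mul1.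
  - intros f g. apply eq_true_iff_eq.
    rewrite andb_true_iff, !principal_chi_true. apply sl_le_mul.
Qed.

Lemma ideal_of_is_ideal (A : character E -> Prop) : is_ideal (ideal_of A).
Proof.
  split.
  - intros phi H0. unfold U in H0. rewrite chi_zero in H0. discriminate.
  - intros e f Hf phi Hef. apply Hf. exact (proj2 (proj1 (chi_mul_true phi e f) Hef)).
Qed.

Lemma open_of_gen_open (I : E -> Prop) : gen_open (open_of I).
Proof.
  apply (go_ext E (fun phi => exists j : {e | I e}, U (proj1_sig j) phi)).
  - apply go_union. intro j. apply go_basic.
  - intro phi; split.
    + intros [[e He] Hphi]. now exists e.
    + intros [e [He Hphi]]. now exists (exist _ e He).
Qed.

Lemma ideal_of_open_of (I : E -> Prop) (e : E) :
  is_ideal I -> ideal_of (open_of I) e <-> I e.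
Proof.
  intros [HI0 HImul]; split.
  - intro Hcover. destruct (classic (e = sl_zero E)) as [-> | He0]; [exact HI0 |].
    pose (phi := exist _ (principal_chi e) (principal_chi_is_character e He0)
                 : character E).
    assert (Hphi : U e phi) by (apply principal_chi_true, sl_mulI).
    destruct (Hcover phi Hphi) as [f [Hf Hef]].
    apply principal_chi_true in Hef.
    rewrite <- Hef. apply HImul, Hf.
  - intros He phi Hphi. now exists e.
Qed.

Lemma open_of_ideal_of_sub (A : character E -> Prop) (phi : character E) :
  open_of (ideal_of A) phi -> A phi.
Proof. intros [e [He Hphi]]. exact (He phi Hphi). Qed.

Lemma gen_open_sub_open_of_ideal_of (A : character E -> Prop) :
  gen_open A -> forall phi, A phi -> open_of (ideal_of A) phi.
Proof.
  induction 1 as [e | | A B _ IHA _ IHB | J F _ IHF | A B _ IHA Hiff];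
    intros phi Hphi.
  - exists e. split; [intros psi Hpsi; exact Hpsi | exact Hphi].
  - exists (sl_one E). split; [intros ? ?; exact Logic.I | apply chi_one].
  - destruct Hphi as [HA HB].
    destruct (IHA phi HA) as [e [He Hphie]], (IHB phi HB) as [f [Hf Hphif]].
    exists (sl_mul E e f). split.
    + intros psi [Hpsie Hpsif]%chi_mul_true. split; [apply He | apply Hf]; assumption.
    + now apply chi_mul_true.
  - destruct Hphi as [j Hj]. destruct (IHF j phi Hj) as [e [He Hphie]].
    exists e. split; [| exact Hphie].
    intros psi Hpsi. exists j. exact (He psi Hpsi).
  - destruct (IHA phi (proj2 (Hiff phi) Hphi)) as [e [He Hphie]].
    exists e. split; [| exact Hphie].
    intros psi Hpsi. apply Hiff, He, Hpsi.
Qed.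

End Semilattice.

Theorem lemma2p14 (E : semilattice) :
  (forall A : character E -> Prop, gen_open A -> is_ideal (ideal_of A)) /\
  (forall I : E -> Prop, is_ideal I -> gen_open (open_of I)) /\
  (forall I : E -> Prop, is_ideal I ->
     forall e : E, ideal_of (open_of I) e <-> I e) /\
  (forall A : character E -> Prop, gen_open A ->
     forall phi : character E, open_of (ideal_of A) phi <-> A phi) /\
  (forall I : E -> Prop, forall phi : character E,
     open_of I phi <-> (exists e, I e /\ U e phi)).
Proof.
  split; [| split; [| split; [| split]]].
  - intros A _. apply ideal_of_is_ideal.
  - intros I _. apply open_of_gen_open.
  - intros I HI e. now apply ideal_of_open_of.
  - intros A HA phi. split.
    + apply open_of_ideal_of_sub.
    + now apply gen_open_sub_open_of_ideal_of.
  - intros I phi. reflexivity.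
Qed.
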